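(* Let $g$ be a positive integer; suppose that for some $l$ the set $S_l$ contains a consecutive prospective prime pair with gap $g$, and let $j>l+2$. Let $(a,a+g)$ be a consecutive prospective prime pair with gap $g$ in $S_j$, and let $B$ be the set of $m_{j+1}\in\{0,\dots,P_{j+1}-1\}$ such that $b=a+m_{j+1}P_j\#$ and $b+g$ are both coprime to $P_{j+1}\#$. For $m_{j+1}\in B$ with $b=a+m_{j+1}P_j\#$, let $\widehat m(m_{j+1})$ be the unique $\widehat m\in\{0,\dots,P_{j+2}-1\}$ with $P_{j+2}\mid b+\widehat mP_{j+1}\#$, and $\widehat m'(m_{j+1})$ the unique $\widehat m'\in\{0,\dots,P_{j+2}-1\}$ with $P_{j+2}\mid b+g+\widehat m'P_{j+1}\#$ (these index the subsets $S_{j+2}^{(\widehat m)}$, $S_{j+2}^{(\widehat m')}$ of $S_{j+2}$ in which the corresponding lesser, resp. greater, component is disallowed). Then the map $m_{j+1}\mapsto\widehat m(m_{j+1})$ is injective on $B$, and the map $m_{j+1}\mapsto\widehat m'(m_{j+1})$ is injective on $B$.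
   Context: $P_k$ denotes the $k$-th prime ($P_1=2$), $P_k\#=\prod_{i=1}^kP_i$. $S_k=\{N\in\mathbb{N}:5\le N\le4+P_k\#\}$ and $S_k^{(m)}=\{N:5+mP_{k-1}\#\le N\le 4+(m+1)P_{k-1}\#\}$ for $0\le m\le P_k-1$. A prospective prime in $S_k$ is an $N\in S_k$ coprime to $P_k\#$; prospective primes $a<b$ in $S_k$ are consecutive if no integer strictly between them is coprime to $P_k\#$; a consecutive prospective prime pair with gap $g$ is a pair $(a,a+g)$ of consecutive prospective primes. *)

From mathcomp Require Import all_boot.
Set Implicit Arguments. Unset Strict Implicit. Unset Printing Implicit Defensive.

Definition next_prime (n : nat) : nat :=
  ex_minn (P := fun p => (n < p) && prime p)
    (let: exist2 p H1 H2 := prime_above n in ex_intro _ p (introT andP (conj H1 H2))).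

Fixpoint pr0 (k : nat) : nat :=
  match k with 0 => 2 | k'.+1 => next_prime (pr0 k') end.

(* P k = P_k, the k-th prime with P 1 = 2 (P 0 is a meaningless default) *)
Definition P (k : nat) : nat := pr0 k.-1.

(* primorial k = P_k# = P_1 * ... * P_k  (primorial 0 = 1) *)
Definition primorial (k : nat) : nat := \prod_(i < k) pr0 i.

Definition inS (k N : nat) : bool := (5 <= N) && (N <= 4 + primorial k).

Definition prospective (k N : nat) : bool := inS k N && coprime N (primorial k).

Definition consecutive (k a b : nat) : bool :=
  [&& prospective k a, prospective k b, a < b &
      all (fun n => ~~ coprime n (primorial k)) (iota a.+1 (b - a.+1))].

Definition cpp_pair (k g a : nat) : bool := consecutive k a (a + g).

(* the unique mh in {0..P_{j+2}-1} with P_{j+2} | c + mh * P_{j+1}#  (default 0) *)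
Definition mhat (j c : nat) : nat :=
  odflt 0 (omap (@nat_of_ord _)
    [pick h : 'I_(P j.+2) | P j.+2 %| c + h * primorial j.+1]).

(** Write [Q := P_j#], [R := P_{j+1}#] and [p := P_{j+2}], a prime coprime
    to both.  If [b = c + m Q] and [b' = c + m' Q] share the
    index [h = mhat], then [p] divides both [b + h R] and [b' + h R], hence
    [p | (m - m') Q], hence [p | m - m'].  Since [m, m' < P_{j+1} < p], this
    forces [m = m'].  The same applies to the greater components, with [c]
    replaced by [a + g]. *)

From mathcomp Require Import all_boot.

Set Implicit Arguments.
Unset Strict Implicit.
Unset Printing Implicit Defensive.

Lemma next_primeP n : n < next_prime n /\ prime (next_prime n).
Proof. by rewrite /next_prime; case: ex_minnP => p /andP[]. Qed.

Lemma pr0_prime k : prime (pr0 k).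
Proof. by case: k => [|k] //=; case: (next_primeP (pr0 k)). Qed.

Lemma pr0_increasing : {homo pr0 : i k / i < k}.
Proof. by apply: homo_ltn => [? ? ? /ltn_trans|i]; [apply | case: (next_primeP (pr0 i))]. Qed.

Lemma coprime_pr0_primorial i k : k <= i -> coprime (pr0 i) (primorial k).
Proof.
move=> le_ki; apply: (big_ind (coprime (pr0 i))) => [|x y|[n /= lt_nk] _].
- exact: coprimen1.
- by rewrite coprimeMr => -> ->.
rewrite prime_coprime ?pr0_prime // dvdn_prime2 ?pr0_prime //.
by rewrite gtn_eqF // pr0_increasing // (leq_trans lt_nk).
Qed.

Lemma exists_dvdn_addM p q c :
  0 < p -> coprime p q -> exists h : 'I_p, p %| c + h * q.
Proof.
move=> p_gt0 co_pq; have [u _] := Bezoutl q p_gt0; rewrite (eqP co_pq) => dvd_p_uq.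
(* [u * q = -1 (mod p)], so [h = c u] works. *)
exists (Ordinal (ltn_pmod (c * u) p_gt0)); rewrite /= /dvdn -modnDmr modnMml modnDmr.
by rewrite -mulnA -{1}[c]muln1 -mulnDr -/(dvdn _ _) dvdn_mull.
Qed.

Lemma eq_modMr_small p q x y :
  coprime p q -> x < p -> y < p -> x * q = y * q %[mod p] -> x = y.
Proof.
move=> co_pq x_lt y_lt; wlog le_yx : x y x_lt y_lt / y <= x.
  by move=> IH eq_xy; case: (leqP y x) => [|/ltnW] le; [|symmetry]; apply: IH.
move/eqP; rewrite eqn_mod_dvd ?leq_mul2r ?le_yx ?orbT // -mulnBl Gauss_dvdl //.
by rewrite -eqn_mod_dvd // !modn_small // => /eqP.
Qed.

Lemma mhat_dvd j c : P j.+2 %| c + mhat j c * primorial j.+1.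
Proof.
rewrite /mhat; case: pickP => [h //|no_h].
have [h dvd_h] := exists_dvdn_addM c (prime_gt0 (pr0_prime j.+1))
  (coprime_pr0_primorial (leqnn j.+1)).
by move: (no_h h); rewrite dvd_h.
Qed.

Lemma mhat_inj j c :
  {in gtn (P j.+2) &, injective (fun m => mhat j (c + m * primorial j))}.
Proof.
move=> m m' /= m_lt m'_lt eq_mhat.
have co_pQ : coprime (P j.+2) (primorial j) by apply: coprime_pr0_primorial.
have mod0 d : d + mhat j d * primorial j.+1 = 0 %[mod P j.+2].
  by apply/eqP; rewrite mod0n -/(dvdn _ _) mhat_dvd.
apply: (eq_modMr_small co_pQ m_lt m'_lt); apply/eqP.
rewrite -(eqn_modDl c) -(eqn_modDr (mhat j (c + m * primorial j) * primorial j.+1)).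
by rewrite mod0 eq_mhat mod0.
Qed.

Theorem lemma3 (g l j a : nat) :
  0 < g ->
  (exists a0, cpp_pair l g a0) ->
  l + 2 < j ->
  cpp_pair j g a ->
  let B := [pred m : nat | (m < P j.+1) &&
              coprime (a + m * primorial j) (primorial j.+1) &&
              coprime (a + m * primorial j + g) (primorial j.+1)] in
  {in B &, injective (fun m => mhat j (a + m * primorial j))} /\
  {in B &, injective (fun m => mhat j (a + m * primorial j + g))}.
Proof.
move=> _ _ _ _ B.
have B_small m : m \in B -> m < P j.+2.
  by case/andP=> /andP[m_lt _] _; apply: (ltn_trans m_lt); exact: pr0_increasing.
split=> m m' /B_small m_lt /B_small m'_lt; last rewrite /= -!(addnAC a g).
  exact: mhat_inj.
exact: mhat_inj.
Qed.
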